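(* Let $\mathcal L$ be either first-order logic (FO) or monadic second-order logic (MSO), let $k\ge 0$, let $\sigma,\sigma'$ be disjoint vocabularies, let $\mathfrak C$ be a class of finite $\sigma'$-structures and $\mathcal D$ a class of finite $\sigma$-structures. Let $\mathcal A,\mathcal A'\in\mathcal D$ and $\mathcal B,\mathcal B'\in\mathfrak C$ with $\mathrm{dom}(\mathcal A)=\mathrm{dom}(\mathcal B)$ and $\mathrm{dom}(\mathcal A')=\mathrm{dom}(\mathcal B')$. If $(\mathcal A',\mathcal B')$ is a $k$-flip of $(\mathcal A,\mathcal B)$ under $(\mathcal L,\mathcal D,\mathfrak C)$, then $\mathrm{tp}^k_{\mathrm{inv}(\mathcal L+\{\mathfrak C\})^{\mathcal D}}(\mathcal A)=\mathrm{tp}^k_{\mathrm{inv}(\mathcal L+\{\mathfrak C\})^{\mathcal D}}(\mathcal A')$.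
   Context: All structures are finite; vocabularies consist of relation and constant symbols. For a $\sigma$-structure $\mathcal A$ and a $\sigma'$-structure $\mathcal B$ with the same domain, $(\mathcal A,\mathcal B)$ denotes the $(\sigma\cup\sigma')$-structure on that domain interpreting $\sigma$ as in $\mathcal A$ and $\sigma'$ as in $\mathcal B$. The quantifier rank of a formula is its depth of quantifier nesting, and $\mathrm{tp}^k_{\mathcal L}(\mathcal M)$ is the set of $\mathcal L$-sentences of quantifier rank at most $k$ true in $\mathcal M$. An $\mathcal L$-sentence $\varphi$ over $\sigma\cup\sigma'$ is $\mathfrak C$-invariant over $\mathcal D$ if for every $\mathcal A\in\mathcal D$ and all $\mathcal B_1,\mathcal B_2\in\mathfrak C$ with domain $\mathrm{dom}(\mathcal A)$, $(\mathcal A,\mathcal B_1)\models\varphi$ iff $(\mathcal A,\mathcal B_2)\models\varphi$; such $\varphi$ defines the query $Q_\varphi=\{\mathcal A\in\mathcal D : (\mathcal A,\mathcal B)\models\varphi$ for some (equivalently all) $\mathcal B\in\mathfrak C$ with $\mathrm{dom}(\mathcal B)=\mathrm{dom}(\mathcal A)\}$. The rank-$k$ $\mathfrak C$-invariant $\mathcal L$ type of $\mathcal A\in\mathcal D$, written $\mathrm{tp}^k_{\mathrm{inv}(\mathcal L+\{\mathfrak C\})^{\mathcal D}}(\mathcal A)$, is the set of all $\mathcal L$-sentences $\varphi$ that are $\mathfrak C$-invariant over $\mathcal D$, have quantifier rank at most $k$, and satisfy $\mathcal A\in Q_\varphi$. For pairs $(\mathcal A,\mathcal B),(\mathcal A',\mathcal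 B')$ with $\mathcal A,\mathcal A'\in\mathcal D$, $\mathcal B,\mathcal B'\in\mathfrak C$ and shared domains, write $(\mathcal A,\mathcal B)\sim_k(\mathcal A',\mathcal B')$ if either $\mathcal A=\mathcal A'$ or $\mathrm{tp}^k_{\mathcal L}(\mathcal A,\mathcal B)=\mathrm{tp}^k_{\mathcal L}(\mathcal A',\mathcal B')$. $(\mathcal A',\mathcal B')$ is a $k$-flip of $(\mathcal A,\mathcal B)$ under $(\mathcal L,\mathcal D,\mathfrak C)$ if it is reachable from $(\mathcal A,\mathcal B)$ by a finite sequence of $\sim_k$ steps. *)

From Stdlib Require Import Relation_Operators.
From mathcomp Require Import all_boot.
Set Implicit Arguments.
Unset Strict Implicit.
Unset Printing Implicit Defensive.

Record vocab := Vocab {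
  rsym : Type;
  arity : rsym -> nat;
  csym : Type }.

(* Union of two disjoint vocabularies (disjointness realized by the sum). *)
Definition vunion (s s' : vocab) : vocab :=
  @Vocab (rsym s + rsym s')%type
         (fun r => match r with inl r0 => arity r0 | inr r0 => arity r0 end)
         (csym s + csym s')%type.

Record sstruct (sig : vocab) (D : finType) := SStruct {
  rinterp : forall r : rsym sig, ('I_(arity r) -> D) -> Prop;
  cinterp : csym sig -> D }.

Definition spair (s s' : vocab) (D : finType) (A : sstruct s D) (B : sstruct s' D)
  : sstruct (vunion s s') D :=
  @SStruct (vunion s s') D
    (fun r => match r return ('I_(@arity (vunion s s') r) -> D) -> Prop with
              | inl r0 => @rinterp _ _ A r0
              | inr r0 => @rinterp _ _ B r0 end)
    (fun c => match c with inl c0 => cinterp A c0 | inr c0 => cinterp B c0 end).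

Definition sclass (sig : vocab) := forall D : finType, sstruct sig D -> Prop.

Inductive term (sig : vocab) :=
| TVar of nat
| TConst of csym sig.

Inductive formula (sig : vocab) :=
| FRel (r : rsym sig) of ('I_(arity r) -> term sig)
| FEq of term sig & term sig
| FMem of nat & term sig           (* X_n(t), second-order atom *)
| FNot of formula sig
| FAnd of formula sig & formula sig
| FOr of formula sig & formula sig
| FEx of nat & formula sig
| FAll of nat & formula sig
| FSEx of nat & formula sig
| FSAll of nat & formula sig.

Arguments TVar {sig}.

Fixpoint qrank (sig : vocab) (f : formula sig) : nat :=
  match f with
  | FRel _ _ | FEq _ _ | FMem _ _ => 0
  | FNot g => qrank g
  | FAnd g h | FOr g h => maxn (qrank g) (qrank h)
  | FEx _ g | FAll _ g | FSEx _ g | FSAll _ g => (qrank g).+1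
  end.

Fixpoint is_FO (sig : vocab) (f : formula sig) : Prop :=
  match f with
  | FRel _ _ | FEq _ _ => True
  | FMem _ _ => False
  | FNot g => is_FO g
  | FAnd g h | FOr g h => is_FO g /\ is_FO h
  | FEx _ g | FAll _ g => is_FO g
  | FSEx _ _ | FSAll _ _ => False
  end.

Inductive logic := FO | MSO.

Definition in_logic (L : logic) (sig : vocab) (f : formula sig) : Prop :=
  match L with FO => is_FO f | MSO => True end.

Definition term_has_var (sig : vocab) (x : nat) (t : term sig) : Prop :=
  match t with TVar y => x = y | TConst _ => False end.

Fixpoint free_fo (sig : vocab) (x : nat) (f : formula sig) : Prop :=
  match f with
  | FRel r ts => exists i, term_has_var x (ts i)
  | FEq t1 t2 => term_has_var x t1 \/ term_has_var x t2
  | FMem _ t => term_has_var x t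
  | FNot g => free_fo x g
  | FAnd g h | FOr g h => free_fo x g \/ free_fo x h
  | FEx y g | FAll y g => x <> y /\ free_fo x g
  | FSEx _ g | FSAll _ g => free_fo x g
  end.

Fixpoint free_so (sig : vocab) (X : nat) (f : formula sig) : Prop :=
  match f with
  | FRel _ _ | FEq _ _ => False
  | FMem Y _ => X = Y
  | FNot g => free_so X g
  | FAnd g h | FOr g h => free_so X g \/ free_so X h
  | FEx _ g | FAll _ g => free_so X g
  | FSEx Y g | FSAll Y g => X <> Y /\ free_so X g
  end.

Definition sentence (sig : vocab) (f : formula sig) : Prop :=
  (forall x, ~ free_fo x f) /\ (forall X, ~ free_so X f).

Section Sem.
Variables (sig : vocab) (D : finType) (M : sstruct sig D).

Definition eval_term (fo : nat -> option D) (t : term sig) : option D :=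
  match t with TVar x => fo x | TConst c => Some (cinterp M c) end.

Definition upd {T : Type} (e : nat -> T) (x : nat) (v : T) : nat -> T :=
  fun y => if y == x then v else e y.

Fixpoint sat (fo : nat -> option D) (so : nat -> {set D}) (f : formula sig) : Prop :=
  match f with
  | FRel r ts => exists a : 'I_(arity r) -> D,
                   (forall i, eval_term fo (ts i) = Some (a i)) /\ rinterp M a
  | FEq t1 t2 => exists d, eval_term fo t1 = Some d /\ eval_term fo t2 = Some d
  | FMem X t => exists d, eval_term fo t = Some d /\ d \in so X
  | FNot g => ~ sat fo so g
  | FAnd g h => sat fo so g /\ sat fo so h
  | FOr g h => sat fo so g \/ sat fo so h
  | FEx x g => exists d : D, sat (upd fo x (Some d)) so g
  | FAll x g => forall d : D, sat (upd fo x (Some d)) so g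
  | FSEx X g => exists S : {set D}, sat fo (upd so X S) g
  | FSAll X g => forall S : {set D}, sat fo (upd so X S) g
  end.

Definition models (f : formula sig) : Prop :=
  sat (fun _ => None) (fun _ => set0) f.

End Sem.

Definition tp (L : logic) (k : nat) (sig : vocab) (D : finType) (M : sstruct sig D)
  : formula sig -> Prop :=
  fun f => [/\ in_logic L f, sentence f, qrank f <= k & models M f].

Section Inv.
Variables (L : logic) (s s' : vocab) (DD : sclass s) (CC : sclass s').

Definition invariant (f : formula (vunion s s')) : Prop :=
  forall (D : finType) (A : sstruct s D), DD A ->
  forall B1 B2 : sstruct s' D, CC B1 -> CC B2 ->
    (models (spair A B1) f <-> models (spair A B2) f).

Definition in_query (f : formula (vunion s s')) (D : finType) (A : sstruct s D) : Prop :=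
  DD A /\ exists B : sstruct s' D, CC B /\ models (spair A B) f.

Definition inv_tp (k : nat) (D : finType) (A : sstruct s D)
  : formula (vunion s s') -> Prop :=
  fun f => [/\ in_logic L f, sentence f, invariant f, qrank f <= k & in_query f A].

Definition spairT := {D : finType & (sstruct s D * sstruct s' D)%type}.

Definition first_of (p : spairT) : {D : finType & sstruct s D} :=
  existT _ (projT1 p) (projT2 p).1.

Definition valid_pair (p : spairT) : Prop :=
  DD (projT2 p).1 /\ CC (projT2 p).2.

Definition pair_struct (p : spairT) := spair (projT2 p).1 (projT2 p).2.

Definition sim_k (k : nat) (p q : spairT) : Prop :=
  valid_pair p /\ valid_pair q /\
  (first_of p = first_of q \/
   forall f, tp L k (pair_struct p) f <-> tp L k (pair_struct q) f).

Definition kflip (k : nat) (p q : spairT) : Prop :=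
  clos_refl_trans spairT (sim_k k) p q.

End Inv.

From Stdlib Require Import Relation_Operators.
From mathcomp Require Import all_boot.
(* Imported last so that [Defs.invariant] shadows [eqtype.invariant]. *)
From Pilot Require Import Defs.

(* For an invariant sentence, membership of A in its query can be tested with
   any admissible expansion (A, B); so the invariant type of A is read off the
   type of any admissible pair (A, B). Both kinds of ~_k step therefore preserve
   the invariant type of the first component, and so does any chain of them. *)

Lemma clos_refl_trans_iff {T : Type} {R : T -> T -> Prop} (P : T -> Prop) :
  (forall x y, R x y -> (P x <-> P y)) ->
  forall x y, clos_refl_trans T R x y -> (P x <-> P y).
Proof.
move=> PR x y; elim=> [u v /PR //|u //|u v w _ Puv _ Pvw].
exact: iff_trans Puv Pvw.
Qed.

Section InvariantType.
Variables (L : logic) (s s' : vocab) (DD : sclass s) (CC : sclass s') (k : nat).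

Lemma in_query_pair {f : formula (vunion s s')} {D : finType}
    {A : sstruct s D} {B : sstruct s' D} :
  invariant DD CC f -> DD D A -> CC D B ->
  in_query DD CC f A <-> models (spair A B) f.
Proof.
move=> inv_f DA CB; split=> [[_ [B0 [CB0 AB0f]]]|ABf].
  exact/(inv_f _ _ DA _ _ CB0 CB).
by split=> //; exists B.
Qed.

Lemma inv_tp_pairE (f : formula (vunion s s')) {D : finType}
    {A : sstruct s D} {B : sstruct s' D} :
  DD D A -> CC D B ->
  inv_tp L DD CC k A f <-> invariant DD CC f /\ tp L k (spair A B) f.
Proof.
move=> DA CB; split=> [[Lf sf inv_f kf /(in_query_pair inv_f DA CB) ABf]|].
  by split=> //; split.
by case=> inv_f [Lf sf kf /(in_query_pair inv_f DA CB) Af]; split.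
Qed.

Lemma inv_tp_sim_k (p q : spairT s s') (f : formula (vunion s s')) :
  sim_k L DD CC k p q ->
  inv_tp L DD CC k (projT2 p).1 f <-> inv_tp L DD CC k (projT2 q).1 f.
Proof.
move=> [[DAp CBp] [[DAq CBq] [same_first|same_tp]]].
  change (inv_tp L DD CC k (projT2 (first_of p)) f <->
          inv_tp L DD CC k (projT2 (first_of q)) f).
  by rewrite same_first.
case: p q DAp CBp DAq CBq same_tp => [Dp [Ap Bp]] [Dq [Aq Bq]] /= DAp CBp DAq CBq same_tp.
apply: iff_trans (inv_tp_pairE f DAp CBp) (iff_trans _ (iff_sym (inv_tp_pairE f DAq CBq))).
by split=> -[inv_f /same_tp].
Qed.

End InvariantType.

Theorem lemma3p1 (L : logic) (k : nat) (s s' : vocab) (CC : sclass s') (DD : sclass s)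
  (D : finType) (A : sstruct s D) (B : sstruct s' D)
  (D' : finType) (A' : sstruct s D') (B' : sstruct s' D') :
  DD D A -> DD D' A' -> CC D B -> CC D' B' ->
  kflip L DD CC k (existT _ D (A, B)) (existT _ D' (A', B')) ->
  forall f : formula (vunion s s'),
    inv_tp L DD CC k A f <-> inv_tp L DD CC k A' f.
Proof.
move=> _ _ _ _ flip f.
apply: (clos_refl_trans_iff (fun p => inv_tp L DD CC k (projT2 p).1 f) _ _ _ flip).
by move=> p q; apply: inv_tp_sim_k.
Qed.
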